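(* Let $M$ be a closed Riemannian manifold and $\gamma$ a closed piecewise differentiable curve on $M$ of length $L$. Suppose there is a homotopy $H(t,\tau)=\gamma_\tau(t)$ of width $W$ contracting $\gamma=\gamma_0$ to a point through closed curves of length at most $L$. Then there is a homotopy contracting $\gamma$ to the constant loop at $\gamma(0)$ through loops based at $\gamma(0)$, each of length at most $L+2W$.
   Context: For a homotopy of closed curves $H(t,\tau)$ ($t$ the curve parameter, $\tau\in[0,1]$ the homotopy parameter), its width is $\sup_t \ell(\tau\mapsto H(t,\tau))$, the maximal length of the trajectory of a point of the curve during the homotopy. *)

From HB Require Import structures.
From mathcomp Require Import all_boot all_order all_algebra.
From mathcomp Require Import all_classical all_reals all_analysis.
Set Implicit Arguments. Unset Strict Implicit. Unset Printing Implicit Defensive.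
Import Order.TTheory GRing.Theory Num.Theory.
Import numFieldNormedType.Exports.
Local Open Scope classical_set_scope.
Local Open Scope ring_scope.

Section Defs.
Variable R : realType.

Definition eucl {N : nat} (v : 'rV[R]_N) : R :=
  Num.sqrt (\sum_(i < N) v ord0 i ^+ 2).

Fixpoint Ck {N c : nat} (n : nat) (f : 'rV[R]_N -> 'rV[R]_c) : Prop :=
  match n with
  | 0 => continuous f
  | n'.+1 => (forall x, differentiable f x) /\
             forall v, Ck n' (fun x => 'd f x v)
  end.

Definition smooth {N c : nat} (f : 'rV[R]_N -> 'rV[R]_c) : Prop :=
  forall n, Ck n f.

(* M is a closed (compact, boundaryless) smooth embedded submanifold of R^N
   of codimension c: locally a regular level set of a smooth map. *)
Definition closed_submanifold (N c : nat) (M : set 'rV[R]_N) : Prop :=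
  compact M /\
  forall p, M p -> exists (U : set 'rV[R]_N) (F : 'rV[R]_N -> 'rV[R]_c),
    [/\ open U, U p, smooth F,
        (forall w, exists v, 'd F p v = w) &
        M `&` U = F @^-1` [set 0] `&` U].

Definition curve_length {N : nat} (g : R -> 'rV[R]_N) (a b : R) : \bar R :=
  ereal_sup [set x : \bar R | exists (n : nat) (s : nat -> R),
     [/\ s 0%N = a, s n = b, (forall i, (i < n)%N -> s i <= s i.+1) &
         x = ((\sum_(i < n) eucl (g (s i.+1) - g (s i)))%:E)%E]].

Definition piecewise_C1 {N : nat} (g : R -> 'rV[R]_N) : Prop :=
  exists (n : nat) (s : nat -> R),
    [/\ s 0%N = 0, s n = 1, (forall i, (i < n)%N -> s i < s i.+1) &
        forall i, (i < n)%N -> exists h : R -> 'rV[R]_N,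
          [/\ forall x, derivable h x 1, continuous (derive1 h) &
              forall x, s i <= x <= s i.+1 -> h x = g x]].

Definition unit_square : set (R * R) :=
  [set p | 0 <= p.1 <= 1 /\ 0 <= p.2 <= 1].

End Defs.

From HB Require Import structures.
From mathcomp Require Import all_boot all_order all_algebra.
From mathcomp Require Import all_classical all_reals all_analysis.
From mathcomp Require Import ring lra.
Import Order.TTheory GRing.Theory Num.Theory.
Import numFieldNormedType.Exports.
Local Open Scope classical_set_scope.
Local Open Scope ring_scope.

(* Conjugate the free homotopy by the trajectory tau |-> H 0 tau of the base
   point.  For u <= 1/2 the loop at time u runs along the trajectory from
   H 0 0 = gamma 0 to H 0 (2 u), traverses the closed curve H ^~ (2 u) and runs
   back, so its length is at most W + L + W.  For u >= 1/2 the curve H ^~ 1 has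
   shrunk to a point, and the loop only runs along the trajectory and back,
   retracting it onto gamma 0.  Lengths are compared through inscribed
   polygons, which only grow under refinement and are carried along by
   monotone reparametrisations. *)

Set Implicit Arguments.
Unset Strict Implicit.
Unset Printing Implicit Defensive.

Lemma cauchy_schwarz (R : realFieldType) (I : finType) (a b : I -> R) :
  (\sum_i a i * b i) ^+ 2 <= (\sum_i a i ^+ 2) * (\sum_i b i ^+ 2).
Proof.
have sumsq_prod : \sum_i \sum_j a i ^+ 2 * b j ^+ 2 =
    (\sum_i a i ^+ 2) * (\sum_i b i ^+ 2).
  by rewrite mulr_suml; apply: eq_bigr => i _; rewrite mulr_sumr.
have lagrange : \sum_i \sum_j (a i * b j - a j * b i) ^+ 2 =
    2 * ((\sum_i a i ^+ 2) * (\sum_i b i ^+ 2)) - 2 * (\sum_i a i * b i) ^+ 2.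
  have expand i j : (a i * b j - a j * b i) ^+ 2 =
      a i ^+ 2 * b j ^+ 2 + a j ^+ 2 * b i ^+ 2 - 2 * (a i * b i * (a j * b j)).
    by ring.
  under eq_bigr do under eq_bigr do rewrite expand.
  under eq_bigr do rewrite sumrB big_split /=.
  rewrite sumrB big_split /= sumsq_prod.
  rewrite (exchange_big _ _ _ _ _ (fun i j => a j ^+ 2 * b i ^+ 2)) /= sumsq_prod.
  have -> : \sum_i \sum_j 2 * (a i * b i * (a j * b j)) =
      2 * (\sum_i a i * b i) ^+ 2.
    rewrite expr2 mulr_suml mulr_sumr; apply: eq_bigr => i _.
    by rewrite !mulr_sumr; apply: eq_bigr => j _; ring.
  ring.
have : 0 <= \sum_i \sum_j (a i * b j - a j * b i) ^+ 2.
  by apply: sumr_ge0 => i _; apply: sumr_ge0 => j _; exact: sqr_ge0.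
by rewrite lagrange subr_ge0 ler_pM2l.
Qed.

Section InscribedPolygons.
Variables (R : realType) (N : nat).
Implicit Types (f g : R -> 'rV[R]_N) (u v : 'rV[R]_N).

Lemma eucl_ge0 v : 0 <= eucl v.
Proof. exact: sqrtr_ge0. Qed.

Lemma euclN v : eucl (- v) = eucl v.
Proof. by congr Num.sqrt; apply: eq_bigr => i _; rewrite mxE sqrrN. Qed.

Lemma eucl_distC u v : eucl (u - v) = eucl (v - u).
Proof. by rewrite -euclN opprB. Qed.

Lemma ler_euclD u v : eucl (u + v) <= eucl u + eucl v.
Proof.
rewrite /eucl.
set A := \sum_i u ord0 i ^+ 2; set B := \sum_i v ord0 i ^+ 2.
set C := \sum_i u ord0 i * v ord0 i.
have A0 : 0 <= A by apply: sumr_ge0 => i _; exact: sqr_ge0.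
have B0 : 0 <= B by apply: sumr_ge0 => i _; exact: sqr_ge0.
have sumsqD : \sum_i (u + v) ord0 i ^+ 2 = A + B + 2 * C.
  rewrite /A /B /C mulr_sumr -!big_split /=.
  by apply: eq_bigr => i _; rewrite mxE; ring.
have CS : C <= Num.sqrt A * Num.sqrt B.
  rewrite -sqrtrM // (le_trans (ler_norm C)) // -sqrtr_sqr.
  by rewrite ler_wsqrtr // cauchy_schwarz.
rewrite sumsqD -[X in _ <= X]ger0_norm ?addr_ge0 ?sqrtr_ge0 //.
by rewrite -sqrtr_sqr ler_wsqrtr // sqrrD !sqr_sqrtr //; lra.
Qed.

Inductive inscribed g : R -> R -> R -> Prop :=
| inscribed_nil a : inscribed g a a 0
| inscribed_cons a x b S : a <= x -> inscribed g x b S ->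
    inscribed g a b (eucl (g x - g a) + S).

Lemma inscribed_le g a b S : inscribed g a b S -> a <= b.
Proof. by elim=> // a' x b' S' ax _; exact: le_trans. Qed.

Lemma inscribed_chord g a b : a <= b -> inscribed g a b (eucl (g b - g a)).
Proof.
by move=> ab; rewrite -[X in inscribed _ _ _ X]addr0; exact: inscribed_cons ab (inscribed_nil _ _).
Qed.

Lemma inscribed_cat g a b c S1 S2 :
  inscribed g a b S1 -> inscribed g b c S2 -> inscribed g a c (S1 + S2).
Proof.
elim=> [a'|a' x b' S ax _ IH] P2; first by rewrite add0r.
by rewrite -addrA; apply: inscribed_cons => //; exact: IH.
Qed.

Lemma inscribed_split g a b c S : inscribed g a c S -> a <= b -> b <= c ->
  exists S1 S2, [/\ inscribed g a b S1, inscribed g b c S2 & S <= S1 + S2].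
Proof.
move=> P; elim: P b => [a' | a' x c' S' ax P IH] b ab bc.
  have -> : b = a' by apply/eqP; rewrite eq_le bc ab.
  by exists 0, 0; split; rewrite ?addr0 //; exact: inscribed_nil.
have [xb|bx] := leP x b.
  have [S1 [S2 [P1 P2 le12]]] := IH b xb bc.
  exists (eucl (g x - g a') + S1), S2; split => //; first exact: inscribed_cons.
  by rewrite -addrA lerD2l.
exists (eucl (g b - g a')), (eucl (g x - g b) + S'); split.
- exact: inscribed_chord.
- by apply: inscribed_cons => //; exact: ltW.
- rewrite addrA lerD2r.
  have -> : g x - g a' = (g b - g a') + (g x - g b) by rewrite [RHS]addrC addrA subrK.
  exact: ler_euclD.
Qed.

Lemma eq_inscribed f g a b S : (forall x, a <= x <= b -> f x = g x) ->
  inscribed f a b S -> inscribed g a b S.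
Proof.
move=> fg P; elim: P fg => [a'|a' x b' S' ax P IH] fg; first exact: inscribed_nil.
have xb := inscribed_le P.
rewrite fg ?ax // fg ?lexx ?(le_trans ax xb) //.
apply: inscribed_cons => //; apply: IH => y /andP[xy yb].
by apply: fg; rewrite yb (le_trans ax xy).
Qed.

Lemma inscribed_comp_homo g (phi : R -> R) a b S :
  (forall x y, a <= x -> x <= y -> y <= b -> phi x <= phi y) ->
  inscribed (g \o phi) a b S -> inscribed g (phi a) (phi b) S.
Proof.
move=> phi_homo P; elim: P phi_homo => [a'|a' x b' S' ax P IH] phi_homo.
  exact: inscribed_nil.
apply: inscribed_cons; first exact: phi_homo (inscribed_le P).
by apply: IH => y z xy; apply: phi_homo; exact: le_trans ax xy.
Qed.

Lemma inscribed_comp_nhomo g (phi : R -> R) a b S :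
  (forall x y, a <= x -> x <= y -> y <= b -> phi y <= phi x) ->
  inscribed (g \o phi) a b S -> inscribed g (phi b) (phi a) S.
Proof.
move=> phi_nhomo P; elim: P phi_nhomo => [a'|a' x b' S' ax P IH] phi_nhomo.
  exact: inscribed_nil.
rewrite addrC; apply: inscribed_cat.
  by apply: IH => y z xy; apply: phi_nhomo; exact: le_trans ax xy.
by rewrite /= eucl_distC; apply: inscribed_chord; exact: phi_nhomo (inscribed_le P).
Qed.

Lemma inscribedP g a b S : inscribed g a b S <-> exists n (s : nat -> R),
  [/\ s 0%N = a, s n = b, (forall i, (i < n)%N -> s i <= s i.+1) &
      S = \sum_(i < n) eucl (g (s i.+1) - g (s i))].
Proof.
split.
  elim=> [a'|a' x b' S' ax _ [n [s [s0 sn s_homo ->]]]].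
    by exists 0%N, (fun _ => a'); split => //; rewrite big_ord0.
  exists n.+1, (fun i => if i is j.+1 then s j else a'); split => //.
  - by case=> [|i] /= ?; [rewrite s0 | exact: s_homo].
  - by rewrite big_ord_recl /= s0.
case=> n [s [s0 sn s_homo ->]]; elim: n a s s0 sn s_homo => [|n IH] a s s0 sn s_homo.
  by rewrite big_ord0 -s0 sn; exact: inscribed_nil.
rewrite big_ord_recl /= -s0; apply: inscribed_cons; first exact: s_homo.
have := IH (s 1%N) (fun i => s i.+1) erefl sn (fun i => s_homo i.+1).
by congr inscribed; apply: eq_bigr.
Qed.

Local Open Scope ereal_scope.

Lemma curve_length_ge g a b S : inscribed g a b S -> S%:E <= curve_length g a b.
Proof.
by move=> /inscribedP [n [s [s0 sn s_homo ->]]]; apply: ereal_sup_ubound; exists n, s.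
Qed.

Lemma curve_length_le g a b (x : \bar R) :
  (forall S, inscribed g a b S -> S%:E <= x) -> curve_length g a b <= x.
Proof.
move=> le_x; apply: ge_ereal_sup => _ [n [s [s0 sn s_homo ->]]].
by apply/le_x/inscribedP; exists n, s.
Qed.

Lemma curve_length_ge0 g a b : (a <= b)%R -> 0 <= curve_length g a b.
Proof.
move=> ab; apply: le_trans (curve_length_ge (inscribed_chord g ab)).
by rewrite lee_fin eucl_ge0.
Qed.

Lemma curve_length_le_cat g a b c : (a <= b)%R -> (b <= c)%R ->
  curve_length g a c <= curve_length g a b + curve_length g b c.
Proof.
move=> ab bc; apply: curve_length_le => S P.
have [S1 [S2 [P1 P2 S12]]] := inscribed_split P ab bc.
apply: le_trans (leeD (curve_length_ge P1) (curve_length_ge P2)).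
by rewrite -EFinD lee_fin.
Qed.

Lemma le_curve_length_r g a b c : (b <= c)%R ->
  curve_length g a b <= curve_length g a c.
Proof.
move=> bc; apply: curve_length_le => S P.
apply: le_trans (curve_length_ge (inscribed_cat P (inscribed_chord g bc))).
by rewrite lee_fin lerDl eucl_ge0.
Qed.

Lemma curve_length_comp_homo f g (phi : R -> R) a b :
  (forall x y, a <= x -> x <= y -> y <= b -> phi x <= phi y)%R ->
  (forall x, (a <= x <= b)%R -> g x = f (phi x)) ->
  curve_length g a b <= curve_length f (phi a) (phi b).
Proof.
move=> phi_homo gE; apply: curve_length_le => S P.
exact/curve_length_ge/(inscribed_comp_homo phi_homo)/(eq_inscribed gE).
Qed.

Lemma curve_length_comp_nhomo f g (phi : R -> R) a b :
  (forall x y, a <= x -> x <= y -> y <= b -> phi y <= phi x)%R ->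
  (forall x, (a <= x <= b)%R -> g x = f (phi x)) ->
  curve_length g a b <= curve_length f (phi b) (phi a).
Proof.
move=> phi_nhomo gE; apply: curve_length_le => S P.
exact/curve_length_ge/(inscribed_comp_nhomo phi_nhomo)/(eq_inscribed gE).
Qed.

End InscribedPolygons.

Lemma within_continuous_comp (T U V : topologicalType) (A : set T) (B : set U)
    (phi : T -> U) (h : U -> V) :
  (forall x, A x -> B (phi x)) -> (forall x, A x -> {for x, continuous phi}) ->
  {within B, continuous h} -> {within A, continuous (h \o phi)}.
Proof.
move=> AB phi_cont h_cont; apply/subspace_continuousP => x Ax.
apply: cvg_trans ((subspace_continuousP B h).1 h_cont (phi x) (AB x Ax)).
change (h @ (phi @ within A (nbhs x)) `=>` h @ within B (nbhs (phi x))).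
apply: cvg_fmap2 => P /= BP.
have phiP : nbhs x (fun z => B (phi z) -> P (phi z)) := phi_cont x Ax _ BP.
by apply: filterS phiP => z Pz Az; exact: Pz (AB z Az).
Qed.

Section HalfPlanes.
Variable R : realFieldType.

Definition halfplane (a b c : R) := [set p : R * R | a * p.1 + b * p.2 <= c].

Lemma closed_halfplane a b c : closed (halfplane a b c).
Proof.
have cont : continuous (fun p : R * R => c - (a * p.1 + b * p.2)).
  move=> p; apply: cvgB; first exact: cvg_cst.
  by apply: cvgD; apply: cvgM;
    [exact: cvg_cst | exact: cvg_fst | exact: cvg_cst | exact: cvg_snd].
have := (continuous_closedP _).1 cont _ (@closed_ge R 0).
by congr closed; apply/seteqP; split => p /=; rewrite subr_ge0.
Qed.

End HalfPlanes.

Lemma closed_unit_square (R : realType) : closed (@unit_square R).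
Proof.
have -> : @unit_square R =
    halfplane (-1) 0 0 `&` halfplane 1 0 1 `&` halfplane 0 (-1) 0 `&` halfplane 0 1 1.
  apply/seteqP; split => p /=.
    by case=> /andP[? ?] /andP[? ?]; rewrite /halfplane /=; do !split; lra.
  by rewrite /halfplane /= => -[[[? ?] ?] ?]; split; apply/andP; split; lra.
by do !apply: closedI; exact: closed_halfplane.
Qed.

Ltac case_min :=
  repeat match goal with |- context[Num.min ?x ?y] => case: (leP x y) end;
  intros.

Section BasedHomotopy.
Variables (R : realType) (N : nat) (H : R -> R -> 'rV[R]_N).

Definition retract_param (t u : R) :=
  Num.min (Num.min (4 * t) (4 - 4 * t)) (Num.min (2 * u) (2 - 2 * u)).

Definition curve_param (t u : R) := (2 * t - u) / (2 - 2 * u).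

Definition in_middle (t u : R) : bool :=
  [&& 2 * u <= 1, u <= 2 * t & 2 * t <= 2 - u].

Definition based_homotopy (t u : R) :=
  if in_middle t u then H (curve_param t u) (2 * u) else H 0 (retract_param t u).

Lemma retract_param_01 t u : 0 <= t <= 1 -> 0 <= u <= 1 ->
  0 <= retract_param t u <= 1.
Proof.
by move=> /andP[? ?] /andP[? ?]; rewrite /retract_param; apply/andP; split; case_min; lra.
Qed.

Lemma curve_param_01 t u : in_middle t u -> 0 <= curve_param t u <= 1.
Proof.
case/and3P => ? ? ?; have d_gt0 : 0 < 2 - 2 * u by lra.
rewrite /curve_param; apply/andP; split.
  by apply: divr_ge0; lra.
by rewrite ler_pdivrMr // mul1r; lra.
Qed.

Lemma based_homotopy_in_square t u : 0 <= t <= 1 -> 0 <= u <= 1 ->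
  exists2 p, unit_square p & based_homotopy t u = H p.1 p.2.
Proof.
move=> t01 u01; rewrite /based_homotopy; case: ifP => mid.
  exists (curve_param t u, 2 * u) => //; split; first exact: curve_param_01.
  by move: mid u01 => /and3P[? _ _] /andP[? ?]; apply/andP; split => /=; lra.
exists (0, retract_param t u) => //; split; last exact: retract_param_01.
by rewrite /= lexx ler01.
Qed.

Variable q : 'rV[R]_N.
Hypothesis H_closed : forall tau, 0 <= tau <= 1 -> H 0 tau = H 1 tau.
Hypothesis H_contracted : forall t, 0 <= t <= 1 -> H t 1 = q.

(* The two branches of [based_homotopy] agree on the boundary of the middle
   region: there either [H (curve_param t u) 1 = q] or the curve parameter
   is an endpoint [0] or [1] of the closed curve [H ^~ (2 * u)]. *)
Lemma based_homotopy_outer t u : 0 <= t <= 1 -> 0 <= u <= 1 ->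
  [|| 1 <= 2 * u, 2 * t <= u | 2 - u <= 2 * t] ->
  based_homotopy t u = H 0 (retract_param t u).
Proof.
move=> /andP[t0 t1] /andP[u0 u1] outer; rewrite /based_homotopy.
case: ifP => // mid; have := curve_param_01 mid.
move: mid => /and3P[u_half u_le_t t_le] param01.
have d_neq0 : 2 - 2 * u != 0 by apply/eqP; lra.
case/or3P: outer => boundary.
- have u_eq : 2 * u = 1 by lra.
  have -> : retract_param t u = 1 by rewrite /retract_param; case_min; lra.
  by rewrite u_eq !H_contracted //; lra.
- have -> : curve_param t u = 0.
    by rewrite /curve_param (_ : 2 * t - u = 0) ?mul0r //; lra.
  by congr (H 0 _); rewrite /retract_param; case_min; lra.
- have -> : curve_param t u = 1.
    by rewrite /curve_param (_ : 2 * t - u = 2 - 2 * u) ?divff //; lra.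
  by rewrite -H_closed; [congr (H 0 _); rewrite /retract_param; case_min | ]; lra.
Qed.

Lemma based_homotopy_bottom t : 0 <= t <= 1 -> based_homotopy t 0 = H t 0.
Proof.
move=> /andP[? ?]; rewrite /based_homotopy ifT; last by apply/and3P; split; lra.
by rewrite mulr0 /curve_param !mulr0 !subr0 mulrC mulKf.
Qed.

Lemma based_homotopy_top t : 0 <= t <= 1 -> based_homotopy t 1 = H 0 0.
Proof.
move=> /andP[? ?]; rewrite based_homotopy_outer.
- by congr (H 0 _); rewrite /retract_param; case_min; lra.
- by apply/andP; split.
- by rewrite ler01 lexx.
- by apply/orP; left; lra.
Qed.

Lemma based_homotopy_left u : 0 <= u <= 1 -> based_homotopy 0 u = H 0 0.
Proof.
move=> /andP[? ?]; rewrite based_homotopy_outer.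
- by congr (H 0 _); rewrite /retract_param; case_min; lra.
- by rewrite lexx ler01.
- by apply/andP; split.
- by apply/or3P; constructor 2; lra.
Qed.

Lemma based_homotopy_right u : 0 <= u <= 1 -> based_homotopy 1 u = H 0 0.
Proof.
move=> /andP[? ?]; rewrite based_homotopy_outer.
- by congr (H 0 _); rewrite /retract_param; case_min; lra.
- by rewrite ler01 lexx.
- by apply/andP; split.
- by apply/or3P; constructor 3; lra.
Qed.

Lemma curve_param_continuous (p : R * R) : 2 * p.2 <= 1 ->
  {for p, continuous (fun x : R * R => (curve_param x.1 x.2, 2 * x.2))}.
Proof.
move=> p_half; apply: (@cvg_pair _ _ _ _ (nbhs _) (nbhs _)) => /=.
  apply: cvgM.
    by apply: cvgB; [apply: cvgM; [exact: cvg_cst | exact: cvg_fst] | exact: cvg_snd].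
  apply: cvgV; first by apply/eqP; lra.
  by apply: cvgB; [exact: cvg_cst | apply: cvgM; [exact: cvg_cst | exact: cvg_snd]].
by apply: cvgM; [exact: cvg_cst | exact: cvg_snd].
Qed.

Lemma retract_param_continuous :
  continuous (fun p : R * R => (0 : R, retract_param p.1 p.2)).
Proof.
move=> p; apply: (@cvg_pair _ _ _ _ (nbhs _) (nbhs _)) => /=; first exact: cvg_cst.
have min_cont (f g : R * R -> R) :
    {for p, continuous f} -> {for p, continuous g} ->
    Num.min (f x) (g x) @[x --> p] --> Num.min (f p) (g p).
  exact: continuous_min.
have scale_cont (a : R) (f : R * R -> R) :
    {for p, continuous f} -> {for p, continuous (fun x => a * f x)}.
  by move=> f_cont; apply: cvgM; [exact: cvg_cst | exact: f_cont].
have mirror_cont (a : R) (f : R * R -> R) :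
    {for p, continuous f} -> {for p, continuous (fun x => a - a * f x)}.
  by move=> f_cont; apply: cvgB; [exact: cvg_cst | exact: scale_cont].
by apply: (min_cont); apply: (min_cont);
  [apply: (scale_cont) | apply: (mirror_cont) | apply: (scale_cont) | apply: (mirror_cont)];
  [exact: cvg_fst | exact: cvg_fst | exact: cvg_snd | exact: cvg_snd].
Qed.

Definition middle_region : set (R * R) :=
  @unit_square R `&` halfplane 0 2 1 `&` halfplane (-2) 1 0 `&` halfplane 2 1 2.

Definition outer_region : set (R * R) := @unit_square R `&`
  (halfplane 0 (-2) (-1) `|` halfplane 2 (-1) 0 `|` halfplane (-2) (-1) (-2)).

Lemma unit_square_middle_outer : @unit_square R = middle_region `|` outer_region.
Proof.
apply/seteqP; split => [p sq_p|p [[[[]]]|[]] //].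
rewrite /middle_region /outer_region /halfplane /=.
case: (leP 1 (2 * p.2)) => ?; first by right; split => //; left; left; lra.
case: (leP (2 * p.1) p.2) => ?; first by right; split => //; left; right; lra.
case: (leP (2 - p.2) (2 * p.1)) => ?; first by right; split => //; right; lra.
by left; do !split => //; lra.
Qed.

Hypothesis H_cont :
  {within @unit_square R, continuous (fun p : R * R => H p.1 p.2)}.

Lemma based_homotopy_continuous_middle :
  {within middle_region, continuous (fun p : R * R => based_homotopy p.1 p.2)}.
Proof.
apply: (@subspace_eq_continuous _ _ _ ((fun p : R * R => H p.1 p.2) \o
    (fun p : R * R => (curve_param p.1 p.2, 2 * p.2)))).
  move=> p /set_mem [[[_ h1] h2] h3]; rewrite /halfplane /= in h1 h2 h3.
  by rewrite /from_subspace /based_homotopy ifT //; apply/and3P; split; lra.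
apply: within_continuous_comp H_cont.
  move=> p [[[sq h1] h2] h3]; rewrite /halfplane /= in h1 h2 h3.
  have mid : in_middle p.1 p.2 by apply/and3P; split; lra.
  split => /=; first exact: curve_param_01.
  by case: sq => _ /andP[? ?]; apply/andP; split; lra.
move=> p [[[_ h1] _] _]; rewrite /halfplane /= in h1.
by apply: curve_param_continuous; lra.
Qed.

Lemma based_homotopy_continuous_outer :
  {within outer_region, continuous (fun p : R * R => based_homotopy p.1 p.2)}.
Proof.
apply: (@subspace_eq_continuous _ _ _ ((fun p : R * R => H p.1 p.2) \o
    (fun p : R * R => (0, retract_param p.1 p.2)))).
  move=> p /set_mem [[t01 u01] outer]; rewrite /halfplane /= in outer.
  rewrite /from_subspace based_homotopy_outer //.
  by case: outer => [[?|?]|?]; apply/or3P; [constructor 1|constructor 2|constructor 3]; lra.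
apply: within_continuous_comp H_cont => [p [[t01 u01] _]|p _].
  by split => /=; [rewrite lexx ler01 | exact: retract_param_01].
exact: retract_param_continuous.
Qed.

Lemma based_homotopy_continuous :
  {within @unit_square R, continuous (fun p : R * R => based_homotopy p.1 p.2)}.
Proof.
rewrite unit_square_middle_outer; apply: withinU_continuous.
- rewrite /middle_region.
  by do ![exact: closed_unit_square | exact: closed_halfplane | apply: closedI].
- rewrite /outer_region.
  by do ![exact: closed_unit_square | exact: closed_halfplane
         | apply: closedI | apply: closedU].
- exact: based_homotopy_continuous_middle.
- exact: based_homotopy_continuous_outer.
Qed.

Variables (L W : R).
Hypothesis trajectory_le : (curve_length (H 0) 0 1 <= W%:E)%E.
Hypothesis curves_le :
  forall tau, 0 <= tau <= 1 -> (curve_length (H ^~ tau) 0 1 <= L%:E)%E.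

Lemma along_trajectory_homo (g : R -> 'rV[R]_N) (phi : R -> R) a b :
  (forall x y, a <= x -> x <= y -> y <= b -> phi x <= phi y) ->
  (forall x, a <= x <= b -> g x = H 0 (phi x)) -> phi a = 0 -> phi b <= 1 ->
  (curve_length g a b <= W%:E)%E.
Proof.
move=> phi_homo gE phi_a phi_b.
apply: le_trans (curve_length_comp_homo phi_homo gE) _.
by rewrite phi_a; apply: le_trans (le_curve_length_r _ _ phi_b) trajectory_le.
Qed.

Lemma along_trajectory_nhomo (g : R -> 'rV[R]_N) (phi : R -> R) a b :
  (forall x y, a <= x -> x <= y -> y <= b -> phi y <= phi x) ->
  (forall x, a <= x <= b -> g x = H 0 (phi x)) -> phi b = 0 -> phi a <= 1 ->
  (curve_length g a b <= W%:E)%E.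
Proof.
move=> phi_nhomo gE phi_b phi_a.
apply: le_trans (curve_length_comp_nhomo phi_nhomo gE) _.
by rewrite phi_b; apply: le_trans (le_curve_length_r _ _ phi_a) trajectory_le.
Qed.

Lemma based_homotopy_length_lower u : 0 <= u -> 2 * u <= 1 ->
  (curve_length (based_homotopy ^~ u) 0 1 <= (L + 2 * W)%:E)%E.
Proof.
move=> u0 u_half; have u01 : 0 <= u <= 1 by apply/andP; split; lra.
have cut1 : 0 <= u / 2 by lra.
have cut2 : u / 2 <= 1 - u / 2 by lra.
have cut3 : 1 - u / 2 <= 1 by lra.
rewrite (_ : L + 2 * W = W + (L + W)); last by ring.
apply: le_trans (curve_length_le_cat _ cut1 (le_trans cut2 cut3)) _.
rewrite EFinD; apply: leeD.
  apply: (along_trajectory_homo (phi := fun x => 4 * x)) => /=; last 2 first.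
  - by rewrite mulr0.
  - lra.
  - by move=> x y _ xy _; lra.
  move=> x /andP[? ?]; rewrite based_homotopy_outer //.
  - by congr (H 0 _); rewrite /retract_param; case_min; lra.
  - by apply/andP; split; lra.
  - by apply/or3P; constructor 2; lra.
apply: le_trans (curve_length_le_cat _ cut2 cut3) _.
rewrite EFinD; apply: leeD.
  have d_gt0 : 0 < 2 - 2 * u by lra.
  have param_homo x y : u / 2 <= x -> x <= y -> y <= 1 - u / 2 ->
      curve_param x u <= curve_param y u.
    by move=> _ xy _; rewrite /curve_param ler_pM2r ?invr_gt0 //; lra.
  have middleE x : u / 2 <= x <= 1 - u / 2 ->
      based_homotopy x u = H (curve_param x u) (2 * u).
    by move=> /andP[? ?]; rewrite /based_homotopy ifT //; apply/and3P; split; lra.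
  apply: le_trans (curve_length_comp_homo (f := H ^~ (2 * u)) param_homo middleE) _.
  rewrite /curve_param (_ : 2 * (u / 2) - u = 0) ?mul0r; last lra.
  rewrite (_ : 2 * (1 - u / 2) - u = 2 - 2 * u) ?divff ?lt0r_neq0 //; last lra.
  by apply: curves_le; apply/andP; split; lra.
apply: (along_trajectory_nhomo (phi := fun x => 4 - 4 * x)) => /=; last 2 first.
- by rewrite mulr1 subrr.
- lra.
- by move=> x y _ xy _; lra.
move=> x /andP[? ?]; rewrite based_homotopy_outer //.
- by congr (H 0 _); rewrite /retract_param; case_min; lra.
- by apply/andP; split; lra.
- by apply/or3P; constructor 3; lra.
Qed.

Lemma based_homotopy_length_upper u : 1 <= 2 * u -> u <= 1 ->
  (curve_length (based_homotopy ^~ u) 0 1 <= (W + W)%:E)%E.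
Proof.
move=> u_half u1; have u01 : 0 <= u <= 1 by apply/andP; split; lra.
have cut1 : 0 <= 1 / 2 :> R by lra.
have cut2 : 1 / 2 <= 1 :> R by lra.
apply: le_trans (curve_length_le_cat _ cut1 cut2) _.
have outerE x : 0 <= x <= 1 -> based_homotopy x u = H 0 (retract_param x u).
  by move=> x01; rewrite based_homotopy_outer //; apply/orP; left.
have up (x : R) : x <= 1 / 2 -> Num.min (4 * x) (4 - 4 * x) = 4 * x.
  by move=> ?; apply: min_l; lra.
have down (x : R) : 1 / 2 <= x -> Num.min (4 * x) (4 - 4 * x) = 4 - 4 * x.
  by move=> ?; apply: min_r; lra.
rewrite EFinD; apply: leeD.
  apply: (along_trajectory_homo (phi := fun x => retract_param x u)) => /=.
  - by move=> x y *; rewrite /retract_param !up; [case_min; lra | lra | lra].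
  - by move=> x /andP[? ?]; apply: outerE; apply/andP; split; lra.
  - by rewrite /retract_param up; [case_min; lra | lra].
  - by rewrite /retract_param; case_min; lra.
apply: (along_trajectory_nhomo (phi := fun x => retract_param x u)) => /=.
- by move=> x y *; rewrite /retract_param !down; [case_min; lra | lra | lra].
- by move=> x /andP[? ?]; apply: outerE; apply/andP; split; lra.
- by rewrite /retract_param down; [case_min; lra | lra].
- by rewrite /retract_param; case_min; lra.
Qed.

Lemma based_homotopy_length u : 0 <= u <= 1 -> 0 <= L ->
  (curve_length (based_homotopy ^~ u) 0 1 <= (L + 2 * W)%:E)%E.
Proof.
move=> /andP[u0 u1] L0; have [u_half|u_half] := leP (2 * u) 1.
  exact: based_homotopy_length_lower.
apply: le_trans (based_homotopy_length_upper (ltW u_half) u1) _.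
by rewrite lee_fin; lra.
Qed.

End BasedHomotopy.

Unset Implicit Arguments.
Set Strict Implicit.

Theorem mainTheorem6 (R : realType) (N c : nat) (M : set 'rV[R]_N)
  (gamma : R -> 'rV[R]_N) (L W : R) (H : R -> R -> 'rV[R]_N) :
  closed_submanifold c M ->
  (* gamma: closed piecewise differentiable curve on M of length L *)
  (forall t, 0 <= t <= 1 -> M (gamma t)) ->
  gamma 0 = gamma 1 ->
  piecewise_C1 gamma ->
  curve_length gamma 0 1 = L%:E ->
  (* H: homotopy of closed curves of length <= L, from gamma to a point *)
  {within @unit_square R, continuous (fun p : R * R => H p.1 p.2)} ->
  (forall t tau, 0 <= t <= 1 -> 0 <= tau <= 1 -> M (H t tau)) ->
  (forall t, 0 <= t <= 1 -> H t 0 = gamma t) ->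
  (forall tau, 0 <= tau <= 1 -> H 0 tau = H 1 tau) ->
  (forall tau, 0 <= tau <= 1 -> (curve_length (H ^~ tau) 0 1 <= L%:E)%E) ->
  (exists q, forall t, 0 <= t <= 1 -> H t 1 = q) ->
  (* H has width W *)
  ereal_sup [set curve_length (H t) 0 1 | t in [set t : R | 0 <= t <= 1]]
    = W%:E ->
  exists G : R -> R -> 'rV[R]_N,
    [/\ {within @unit_square R, continuous (fun p : R * R => G p.1 p.2)},
        (forall t tau, 0 <= t <= 1 -> 0 <= tau <= 1 -> M (G t tau)),
        (forall t, 0 <= t <= 1 -> G t 0 = gamma t /\ G t 1 = gamma 0),
        (forall tau, 0 <= tau <= 1 -> G 0 tau = gamma 0 /\ G 1 tau = gamma 0) &
        (forall tau, 0 <= tau <= 1 ->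
           (curve_length (G ^~ tau) 0 1 <= (L + 2 * W)%:E)%E)].
Proof.
move=> _ _ _ _ gamma_len H_cont H_M H_bottom H_closed H_len [q H_contracted].
move=> width.
have gamma0 : H 0 0 = gamma 0 by apply: H_bottom; rewrite lexx ler01.
have L_ge0 : 0 <= L by rewrite -lee_fin -gamma_len curve_length_ge0.
have trajectory_le : (curve_length (H 0%R) 0%R 1%R <= W%:E)%E.
  rewrite -width; apply: ereal_sup_ubound.
  by exists 0%R => //=; rewrite lexx ler01.
exists (based_homotopy H); split.
- exact: based_homotopy_continuous H_closed H_contracted H_cont.
- move=> t u t01 u01; have [p [p1 p2] ->] := based_homotopy_in_square H t01 u01.
  exact: H_M.
- move=> t t01; rewrite based_homotopy_bottom // H_bottom //.
  by rewrite (based_homotopy_top H_closed H_contracted) // gamma0.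
- move=> u u01; rewrite (based_homotopy_left H_closed H_contracted) //.
  by rewrite (based_homotopy_right H_closed H_contracted) // gamma0.
- move=> u u01.
  exact: (based_homotopy_length H_closed H_contracted trajectory_le H_len).
Qed.
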